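(* For all $\varepsilon>0$ there exist $c,n_0\in\mathbb{N}$ such that for all primes $p\ge n_0$ the following holds. If $\delta\ge c/\log p$ (with $p^\delta$ an integer), $\mu>0$ and $r=\mu n$ is a positive integer, then every proper $(r,p^{\delta})$-GAP $X\subseteq\mathbb{Z}_p^n$ is a $(\mu n/p^{0.9\delta},\,0.1,\,\varepsilon)$-additive source of entropy rate $\delta\mu$ in $(\mathbb{Z}_p^n,+)$.
   Context: An $(r,s)$-GAP in $\mathbb{Z}_p^n$ is a set $\{b_0+\sum_{i=1}^r a_ib_i: a_i\in\mathbb{Z},\ 0\le a_i\le s-1\}$ with $b_0,\dots,b_r\in\mathbb{Z}_p^n$; proper means all $s^r$ sums are distinct. For $X\subseteq\mathbb{Z}_p^n$, $\mathrm{Sym}_{1-\alpha}(X)=\{g:|X\cap(X+g)|\ge(1-\alpha)|X|\}$, and $X$ is $(\alpha,\beta,\tau)$-additive if $|X+X|\le|X|^{1+\tau}$ and $|\mathrm{Sym}_{1-\alpha}(X)|\ge|X|^{\beta}$. Entropy rate $\delta'$ means $|X|\ge p^{\delta' n}$. *)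

From Stdlib Require Import Reals.
From mathcomp Require Import all_boot all_algebra.
Set Implicit Arguments. Unset Strict Implicit. Unset Printing Implicit Defensive.
Import GRing.Theory.

Notation vecp p n := 'rV['F_p]_n.

Local Open Scope ring_scope.

Definition gap_map (p n r s : nat) (b0 : vecp p n) (b : 'I_r -> vecp p n)
  (a : {ffun 'I_r -> 'I_s}) : vecp p n :=
  b0 + \sum_(i < r) (b i *+ (a i : nat)).

Definition GAP (p n r s : nat) (b0 : vecp p n) (b : 'I_r -> vecp p n)
  : {set vecp p n} :=
  [set gap_map b0 b a | a : {ffun 'I_r -> 'I_s}].

Definition proper_GAP (p n r s : nat) (b0 : vecp p n) (b : 'I_r -> vecp p n) :
  Prop := injective (@gap_map p n r s b0 b).

Definition sumset (p n : nat) (X : {set vecp p n}) : {set vecp p n} :=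
  [set x + y | x in X, y in X].

Definition shift (p n : nat) (X : {set vecp p n}) (g : vecp p n) : {set vecp p n} :=
  [set x + g | x in X].

Local Close Scope ring_scope.
Local Open Scope R_scope.

Definition Sym (p n : nat) (alpha : R) (X : {set vecp p n}) : {set vecp p n} :=
  [set g | if Rle_dec ((1 - alpha) * INR #|X|) (INR #|X :&: shift X g|) then true else false].

Definition additive (p n : nat) (alpha beta tau : R) (X : {set vecp p n}) : Prop :=
  INR #|sumset X| <= Rpower (INR #|X|) (1 + tau) /\
  Rpower (INR #|X|) beta <= INR #|Sym alpha X|.

Definition entropy_rate (p n : nat) (d : R) (X : {set vecp p n}) : Prop :=
  Rpower (INR p) (d * INR n) <= INR #|X|.

Arguments GAP {p n r} s b0 b.
Arguments proper_GAP {p n r} s b0 b.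

(* A proper (r,s)-GAP X has exactly s^r elements, while X + X lies in an (r,2s)-GAP, so
   |X + X| <= (2s)^r <= |X|^(1+eps) as soon as s^eps >= 2, which the lower bound on delta
   guarantees.  For the symmetry set, take t = floor(s^(1/10)): every g = sum d_i b_i with
   0 <= d_i <= t satisfies |X \cap (X + g)| >= (s - t)^r >= (1 - r t / s) s^r by Bernoulli's
   inequality, and r t / s <= r / s^(9/10); there are (t + 1)^r >= |X|^(1/10) such g. *)

From Stdlib Require Import Reals Lra.
From mathcomp Require Import all_boot all_algebra zify.
Set Implicit Arguments. Unset Strict Implicit. Unset Printing Implicit Defensive.

Section GAPCombinatorics.
Import GRing.Theory.
Local Open Scope ring_scope.
Variables (p n r : nat) (b : 'I_r -> vecp p n).

Lemma gap_map_eq s s' b0 (a : {ffun 'I_r -> 'I_s}) (a' : {ffun 'I_r -> 'I_s'}) :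
  (forall i, a i = a' i :> nat) -> gap_map b0 b a = gap_map b0 b a'.
Proof. by move=> eq_a; congr (_ + _); apply: eq_bigr => i _; rewrite eq_a. Qed.

Lemma gap_mapD s1 s2 s3 (b1 b2 : vecp p n) (a1 : {ffun 'I_r -> 'I_s1})
    (a2 : {ffun 'I_r -> 'I_s2}) (a3 : {ffun 'I_r -> 'I_s3}) :
  (forall i, a3 i = a1 i + a2 i :> nat)%N ->
  gap_map b1 b a1 + gap_map b2 b a2 = gap_map (b1 + b2) b a3.
Proof.
move=> eq_a; rewrite /gap_map addrACA -big_split /=; congr (_ + _).
by apply: eq_bigr => i _; rewrite eq_a mulrnDr.
Qed.

Lemma gap_map_addl s (b0 x : vecp p n) (a : {ffun 'I_r -> 'I_s}) :
  gap_map (b0 + x) b a = gap_map b0 b a + x.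
Proof. exact: addrAC. Qed.

Lemma card_GAP_le s b0 : (#|GAP s b0 b| <= s ^ r)%N.
Proof. by apply: leq_trans (leq_imset_card _ _) _; rewrite card_ffun !card_ord. Qed.

Lemma card_GAP s b0 : proper_GAP s b0 b -> #|GAP s b0 b| = (s ^ r)%N.
Proof. by move=> inj; rewrite card_imset // card_ffun !card_ord. Qed.

Lemma proper_GAP_rebase s b0 b0' : proper_GAP s b0 b -> proper_GAP s b0' b.
Proof.
by move=> inj a a'; rewrite -(subrKC b0 b0') !gap_map_addl => /addIr /inj.
Qed.

Lemma proper_GAP_narrow s t b0 :
  (t <= s)%N -> proper_GAP s b0 b -> proper_GAP t b0 b.
Proof.
move=> le_ts inj a a' eq_a.
have widen_gap (c : {ffun 'I_r -> 'I_t}) :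
    gap_map b0 b [ffun i => widen_ord le_ts (c i)] = gap_map b0 b c.
  by apply: gap_map_eq => i; rewrite ffunE.
have /ffunP eq_w := inj _ _ (etrans (widen_gap a) (etrans eq_a (esym (widen_gap a')))).
by apply/ffunP => i; apply: val_inj; have := eq_w i; rewrite !ffunE => /(congr1 val).
Qed.

Lemma sumset_GAP s b0 : sumset (GAP s b0 b) \subset GAP (s + s) (b0 + b0) b.
Proof.
apply/subsetP => _ /imset2P[_ _ /imsetP[a _ ->] /imsetP[a' _ ->] ->].
have lt_aa' i : (a i + a' i < s + s)%N by have := ltn_ord (a i); have := ltn_ord (a' i); lia.
apply/imsetP; exists [ffun i => Ordinal (lt_aa' i)] => //.
by apply: gap_mapD => i; rewrite ffunE.
Qed.

Lemma GAP_sub_meet_shift s t b0 g : g \in GAP t.+1 0 b ->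
  GAP (s - t) (b0 + g) b \subset GAP s b0 b :&: shift (GAP s b0 b) g.
Proof.
move=> /imsetP[d _ ->]; apply/subsetP => _ /imsetP[a _ ->].
have lt_ad i : (a i + d i < s)%N by have := ltn_ord (a i); have := ltn_ord (d i); lia.
have le_ts : (s - t <= s)%N := leq_subr t s.
rewrite inE; apply/andP; split.
  apply/imsetP; exists [ffun i => Ordinal (lt_ad i)] => //.
  by rewrite gap_map_addl -[b0 in RHS]addr0; apply: gap_mapD => i; rewrite ffunE.
apply/imsetP; exists (gap_map b0 b [ffun i => widen_ord le_ts (a i)]).
  by apply/imsetP; exists [ffun i => widen_ord le_ts (a i)].
by rewrite gap_map_addl; congr (_ + _); apply: gap_map_eq => i; rewrite ffunE.
Qed.

Lemma card_meet_shift_GAP s t b0 g : proper_GAP s b0 b -> g \in GAP t.+1 0 b ->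
  ((s - t) ^ r <= #|GAP s b0 b :&: shift (GAP s b0 b) g|)%N.
Proof.
move=> inj Gg; rewrite -(card_GAP (b0 := b0 + g)); last first.
  exact: (proper_GAP_rebase (b0 := b0)) (proper_GAP_narrow (leq_subr t s) inj).
exact/subset_leq_card/GAP_sub_meet_shift.
Qed.

End GAPCombinatorics.

Local Open Scope R_scope.

Lemma INR_expn (m k : nat) : INR (m ^ k)%N = INR m ^ k.
Proof. by elim: k => [|k IHk] //=; rewrite expnS -IHk -mult_INR. Qed.

Lemma Bernoulli_ineq (x : R) (k : nat) : -1 <= x -> 1 + INR k * x <= (1 + x) ^ k.
Proof.
move=> x_ge; elim: k => [|k IHk]; first by rewrite /=; lra.
rewrite S_INR /=; have := Rmult_le_compat_l _ _ _ (ltac:(lra) : 0 <= 1 + x) IHk.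
have := pos_INR k; nra.
Qed.

Lemma pow_sub_ge (S t : R) (k : nat) :
  0 < S -> 0 <= t <= S -> S ^ k * (1 - INR k * t / S) <= (S - t) ^ k.
Proof.
move=> S_gt0 [t_ge0 t_le].
have t_eq : t = t / S * S by field; lra.
have tS : 0 <= t / S <= 1 by split; nra.
have -> : S - t = S * (1 + - (t / S)) by field; lra.
rewrite Rpow_mult_distr; apply: Rmult_le_compat_l; first by apply: pow_le; lra.
have := Bernoulli_ineq k (ltac:(lra) : -1 <= - (t / S)); rewrite /Rdiv Rmult_assoc; lra.
Qed.

Lemma Rpower_pow_comm (x y : R) (k : nat) : 0 < x -> Rpower (x ^ k) y = Rpower x y ^ k.
Proof.
move=> x_gt0; rewrite -Rpower_pow // Rpower_mult Rmult_comm -Rpower_mult.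
by rewrite Rpower_pow //; apply: exp_pos.
Qed.

Lemma two_le_Rpower (x e : R) : 1 <= e * ln x -> 2 <= Rpower x e.
Proof. by move=> le1; have := exp_ineq1_le (e * ln x); rewrite /Rpower; lra. Qed.

Lemma nat_floor (y : R) : 0 <= y -> exists t : nat, INR t <= y < INR t + 1.
Proof.
move=> y_ge0; have [fl_le fl_gt] := base_Int_part y.
have fl_ge0 : Z.le 0 (Int_part y).
  suff : Z.lt (Z.opp 1) (Int_part y) by lia.
  by apply: lt_IZR; change (IZR (Z.opp 1)) with (-1); lra.
exists (Z.to_nat (Int_part y)); rewrite INR_IZR_INZ Znat.Z2Nat.id //; lra.
Qed.

Section AdditiveGAP.
Variables (p n r s : nat) (b0 : vecp p n) (b : 'I_r -> vecp p n).
Hypotheses (s_gt1 : (1 < s)%N) (proper : proper_GAP s b0 b).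

Lemma INR_card_GAP : INR #|GAP s b0 b| = INR s ^ r.
Proof. by rewrite card_GAP // INR_expn. Qed.

Lemma INR_s_gt1 : 1 < INR s.
Proof. by apply: (lt_INR 1); apply/ltP. Qed.

Lemma sumset_GAP_card_le (eps : R) :
  2 <= Rpower (INR s) eps ->
  INR #|sumset (GAP s b0 b)| <= Rpower (INR #|GAP s b0 b|) (1 + eps).
Proof.
have S_gt0 := Rlt_trans _ _ _ Rlt_0_1 INR_s_gt1.
move=> two_le; rewrite INR_card_GAP Rpower_pow_comm //.
apply: Rle_trans (le_INR _ _ (leP (leq_trans (subset_leq_card (sumset_GAP _ _ _))
                                            (card_GAP_le _ _ _)))) _.
rewrite INR_expn plus_INR; apply: pow_incr; split; first lra.
by rewrite Rpower_plus Rpower_1 //; nra.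
Qed.

Lemma Sym_GAP_card_ge :
  Rpower (INR #|GAP s b0 b|) (1/10) <=
  INR #|Sym (INR r / Rpower (INR s) (9/10)) (GAP s b0 b)|.
Proof.
have S_gt1 := INR_s_gt1; set S := INR s in S_gt1 *.
set y := Rpower S (1/10); set z := Rpower S (9/10).
have y_gt0 : 0 < y by apply: exp_pos.
have z_gt0 : 0 < z by apply: exp_pos.
have S_yz : S = y * z.
  by rewrite /y /z -Rpower_plus -{1}(Rpower_1 S) //; [congr Rpower | ]; lra.
have [t [t_le_y y_lt_t1]] := nat_floor (Rlt_le _ _ y_gt0).
have y_lt_S : y < S.
  by have := Rpower_lt S (1/10) 1 S_gt1 ltac:(lra); rewrite Rpower_1 // /y; lra.
have t_lt_S : INR t < S by lra.
have lt_ts : (t < s)%N by apply/ltP/INR_lt.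
have GAP_sub_Sym : GAP t.+1 0 b \subset Sym (INR r / z) (GAP s b0 b).
  apply/subsetP => g Gg; rewrite inE; case: Rle_dec => // [[]].
  apply: (Rle_trans _ _ _ _ (le_INR _ _ (leP (card_meet_shift_GAP proper Gg)))).
  rewrite INR_expn minus_INR; last exact/leP/ltnW.
  rewrite INR_card_GAP -/S Rmult_comm.
  apply: (Rle_trans _ _ _ _ (pow_sub_ge r (Rlt_trans _ _ _ Rlt_0_1 S_gt1)
                                      (conj (pos_INR t) (Rlt_le _ _ t_lt_S)))).
  apply: Rmult_le_compat_l; first by apply: pow_le; lra.
  have : INR t / S <= / z.
    have -> : / z = y / S by rewrite S_yz; field; lra.
    by apply: Rmult_le_compat_r => //; apply/Rlt_le/Rinv_0_lt_compat; lra.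
  have := pos_INR r; rewrite /Rdiv; nra.
have := le_INR _ _ (leP (subset_leq_card GAP_sub_Sym)).
rewrite card_GAP; last exact: (proper_GAP_rebase (b0 := b0)) (proper_GAP_narrow lt_ts proper).
apply: Rle_trans; rewrite INR_expn INR_card_GAP -/S Rpower_pow_comm -/y; last lra.
by apply: pow_incr; rewrite S_INR; lra.
Qed.

End AdditiveGAP.

Theorem lemma4p1 :
  forall eps : R, 0 < eps ->
  exists c n0 : nat,
  forall p : nat, prime p -> (n0 <= p)%N ->
  forall (n : nat) (delta mu : R) (s r : nat),
    INR c / ln (INR p) <= delta ->
    INR s = Rpower (INR p) delta ->
    0 < mu ->
    (0 < r)%N -> INR r = mu * INR n ->
    forall (b0 : 'rV['F_p]_n) (b : 'I_r -> 'rV['F_p]_n),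
      proper_GAP s b0 b ->
      additive (mu * INR n / Rpower (INR p) (9/10 * delta)) (1/10) eps
               (GAP s b0 b) /\
      entropy_rate (delta * mu) (GAP s b0 b).
Proof.
move=> eps eps_gt0.
have [c [_ inv_eps_lt]] := nat_floor (Rlt_le _ _ (Rinv_0_lt_compat _ eps_gt0)).
exists c.+1, 2%N => p p_prime _ n delta mu s r c_le s_eq _ _ r_eq b0 b proper.
have ln_p_gt0 : 0 < ln (INR p).
  by rewrite -ln_1; apply: ln_increasing; [lra | apply: (lt_INR 1); apply/ltP/prime_gt1].
have ln_s : ln (INR s) = delta * ln (INR p) by rewrite s_eq /Rpower ln_exp.
have c_le_ln_s : INR c + 1 <= ln (INR s).
  have := Rmult_le_compat_r _ _ _ (Rlt_le _ _ ln_p_gt0) c_le.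
  by rewrite ln_s /Rdiv Rmult_assoc Rinv_l ?S_INR; lra.
have eps_ln_s : 1 <= eps * ln (INR s).
  by have := Rinv_r _ (Rgt_not_eq _ _ eps_gt0); nra.
have s_gt1 : (1 < s)%N.
  apply/ltP/INR_lt; have := exp_ineq1_le (ln (INR s)).
  by rewrite {2}ln_s -/(Rpower _ _) -s_eq /=; have := pos_INR c; lra.
have alpha_eq : mu * INR n / Rpower (INR p) (9/10 * delta) = INR r / Rpower (INR s) (9/10).
  by rewrite -r_eq s_eq Rpower_mult Rmult_comm.
split; first split.
- exact: sumset_GAP_card_le (two_le_Rpower eps_ln_s).
- by rewrite alpha_eq; apply: Sym_GAP_card_ge.
- rewrite /entropy_rate INR_card_GAP // Rmult_assoc -r_eq -Rpower_mult -s_eq Rpower_pow; first lra.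
  by have := INR_s_gt1 s_gt1; lra.
Qed.
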